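(* Let $k\in\mathbb N$ and let $\mathbb D_0=(D_0,V_0)$, $\mathbb D_1=(D_1,V_1)$ be monadic models. The following are equivalent: (1) $\mathbb D_0$ and $\mathbb D_1$ satisfy exactly the same $\mathrm{FOE}^\infty(A)$-sentences of quantifier rank at most $k$; (2) $\mathbb D_0\sim^\infty_k\mathbb D_1$; (3) player $\exists$ has a winning strategy in the game $\mathrm{EF}^\infty_k(\mathbb D_0,\mathbb D_1)$.
   Context: Fix a finite set $A$ of unary predicate symbols. A monadic model is a pair $(D,V)$ with $D$ a set (possibly empty) and $V:A\to\wp(D)$. $\mathrm{FOE}^\infty(A)$ is monadic first-order logic with equality over $A$ extended with the quantifiers $\exists^\infty$ (''there are infinitely many'') and $\forall^\infty$ (''all but finitely many''), formulas in negation normal form. On nonempty models the semantics is standard; on the empty model a sentence $Qx.\varphi$ is false for $Q\in\{\exists,\exists^\infty\}$ and true for $Q\in\{\forall,\forall^\infty\}$. Quantifier rank counts nested quantifiers of all four kinds. For $S\subseteq A$, $|S|_{\mathbb D}$ is the number of elements $d$ with $\{a:d\in V(a)\}=S$. The relation $\sim^\infty_0$ relates all models; for $k\ge1$, $\mathbb D\sim^\infty_k\mathbb D'$ iff for every $S\subseteq A$: $|S|_{\mathbb D}=|S|_{\mathbb D'}<k$, or $k\le|S|_{\mathbb D},|S|_{\mathbb D'}<\omega$, or both $|S|_{\mathbb D},|S|_{\mathbb D'}$ are infinite. A partial isomorphism is an injective partial map $f:D_0\rightharpoonup D_1$ with $d\in V_0(a)\iff f(d)\in V_1(a)$ for all $a$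 and $d$ in its domain. The game $\mathrm{EF}^\infty_k(\mathbb D_0,\mathbb D_1)$ has $k$ rounds, positions being pairs of equal-length sequences $\vec s_0,\vec s_1$ (initially empty). In each round $\forall$ chooses either (a) a second-order move: $\forall$ picks an infinite $X_i\subseteq D_i$ in one model, $\exists$ responds with an infinite $X_{1-i}\subseteq D_{1-i}$, $\forall$ picks $d_{1-i}\in X_{1-i}$, and $\exists$ responds with $d_i\in X_i$; or (b) a first-order move: $\forall$ picks $d_i\in D_i$ and $\exists$ responds with $d_{1-i}\in D_{1-i}$. The sequences are extended by $d_0$ resp. $d_1$; $\exists$ survives the round if she is not stuck and the map $\vec s_0\mapsto\vec s_1$ (componentwise) is a well-defined partial isomorphism; she wins if she survives all $k$ rounds. *)

From mathcomp Require Import all_boot.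
From Stdlib Require Import List.
Set Implicit Arguments. Unset Strict Implicit. Unset Printing Implicit Defensive.

Definition finite_pred (D : Type) (P : D -> Prop) : Prop :=
  exists l : list D, forall x, P x -> List.In x l.
Definition infinite_pred (D : Type) (P : D -> Prop) : Prop := ~ finite_pred P.
Definition card_is (D : Type) (P : D -> Prop) (n : nat) : Prop :=
  exists l : list D, List.NoDup l /\ (forall x, P x <-> List.In x l) /\ List.length l = n.

Record model (A : finType) := Model { dom : Type; pval : A -> dom -> Prop }.
Arguments dom {A} m.
Arguments pval {A} m a d.
Arguments Model {A}.

Definition of_type (A : finType) (M : model A) (S : {set A}) (d : dom M) : Prop :=
  forall a : A, pval M a d <-> a \in S.
Arguments of_type {A} M S d.

(* ---------- FOE^oo(A) in negation normal form, de Bruijn variables ---------- *)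
Inductive form (A : Type) : Type :=
| FTrue | FFalse
| FAtom (a : A) (x : nat) | FNAtom (a : A) (x : nat)
| FEq (x y : nat) | FNeq (x y : nat)
| FAnd (p q : form A) | FOr (p q : form A)
| FEx (p : form A) | FAll (p : form A)
| FExInf (p : form A) | FAllInf (p : form A).
Arguments FTrue {A}. Arguments FFalse {A}.

Fixpoint wf (A : Type) (n : nat) (p : form A) : bool :=
  match p with
  | FTrue | FFalse => true
  | FAtom _ x | FNAtom _ x => x < n
  | FEq x y | FNeq x y => (x < n) && (y < n)
  | FAnd p q | FOr p q => wf n p && wf n q
  | FEx p | FAll p | FExInf p | FAllInf p => wf n.+1 p
  end.
Definition sentence (A : Type) (p : form A) : bool := wf 0 p.

Fixpoint qrank (A : Type) (p : form A) : nat :=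
  match p with
  | FTrue | FFalse | FAtom _ _ | FNAtom _ _ | FEq _ _ | FNeq _ _ => 0
  | FAnd p q | FOr p q => maxn (qrank p) (qrank q)
  | FEx p | FAll p | FExInf p | FAllInf p => (qrank p).+1
  end.

(* Satisfaction; env lists the values of de Bruijn variables 0,1,2,... *)
Fixpoint sat (A : finType) (M : model A) (env : list (dom M)) (p : form A) : Prop :=
  match p with
  | FTrue => True
  | FFalse => False
  | FAtom a x => match nth_error env x with Some d => pval M a d | None => False end
  | FNAtom a x => match nth_error env x with Some d => ~ pval M a d | None => False end
  | FEq x y => match nth_error env x, nth_error env y with
               | Some d, Some e => d = e | _, _ => False end
  | FNeq x y => match nth_error env x, nth_error env y with
               | Some d, Some e => d <> e | _, _ => False end
  | FAnd p q => sat env p /\ sat env q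
  | FOr p q => sat env p \/ sat env q
  | FEx p => exists d, sat (d :: env) p
  | FAll p => forall d, sat (d :: env) p
  | FExInf p => infinite_pred (fun d => sat (d :: env) p)
  | FAllInf p => finite_pred (fun d => ~ sat (d :: env) p)
  end.

Arguments sat {A} M env p.

Definition rank_equiv (A : finType) (k : nat) (M N : model A) : Prop :=
  forall p : form A, sentence p -> qrank p <= k -> (sat M nil p <-> sat N nil p).

Definition sim_inf (A : finType) (k : nat) (M N : model A) : Prop :=
  match k with
  | 0 => True
  | _ =>
    forall S : {set A},
      (exists n, n < k /\ card_is (of_type M S) n /\ card_is (of_type N S) n) \/
      (exists n m, k <= n /\ k <= m /\ card_is (of_type M S) n /\ card_is (of_type N S) m) \/
      (infinite_pred (of_type M S) /\ infinite_pred (of_type N S))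
  end.

Definition piso (A : finType) (M N : model A) (s : list (dom M)) (t : list (dom N)) : Prop :=
  List.length s = List.length t /\
  (forall i j d d' e e', nth_error s i = Some d -> nth_error s j = Some d' ->
      nth_error t i = Some e -> nth_error t j = Some e' -> (d = d' <-> e = e')) /\
  (forall i d e, nth_error s i = Some d -> nth_error t i = Some e ->
      forall a, pval M a d <-> pval N a e).

Arguments piso {A} M N s t.

(* ef_win M N n s t : player E has a winning strategy in the remaining n rounds
   from position (s, t); each new pair is added to the front of both sequences. *)
Fixpoint ef_win (A : finType) (M N : model A) (n : nat)
    (s : list (dom M)) (t : list (dom N)) : Prop :=
  match n with
  | 0 => True
  | n'.+1 =>
    (forall d : dom M, exists e : dom N,
        piso M N (d :: s) (e :: t) /\ ef_win n' (d :: s) (e :: t)) /\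
    (forall e : dom N, exists d : dom M,
        piso M N (d :: s) (e :: t) /\ ef_win n' (d :: s) (e :: t)) /\
    (forall X : dom M -> Prop, infinite_pred X ->
       exists Y : dom N -> Prop, infinite_pred Y /\
         forall e, Y e -> exists d, X d /\
           piso M N (d :: s) (e :: t) /\ ef_win n' (d :: s) (e :: t)) /\
    (forall Y : dom N -> Prop, infinite_pred Y ->
       exists X : dom M -> Prop, infinite_pred X /\
         forall d, X d -> exists e, Y e /\
           piso M N (d :: s) (e :: t) /\ ef_win n' (d :: s) (e :: t))
  end.

Arguments ef_win {A} M N n s t.

Definition E_wins (A : finType) (k : nat) (M N : model A) : Prop :=
  ef_win M N k nil nil.

From Stdlib Require Import List Classical ClassicalDescription FunctionalExtensionality PropExtensionality.
From mathcomp Require Import all_boot zify.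
Set Implicit Arguments. Unset Strict Implicit.

(* (3) => (1): a winning strategy for E keeps the played tuples partially
   isomorphic, and a partial isomorphism with r rounds of strategy left
   preserves every formula of rank <= r, by induction on formulas; the
   second-order moves are exactly what is needed for the quantifier
   exists^oo and its dual.
   (1) => (2): for each type S, the sentences "there are at least j elements
   of type S" (rank j <= k) and "there are infinitely many elements of type S"
   (rank 1) pin down the cardinality of S up to the threshold k.
   (2) => (3): E plays the strategy that maintains, with r rounds left, the
   relation ~^oo_r between the sets of not yet played elements of each type:
   she answers an old element by its partner and a new element by a new
   element of the same type; an infinite set X has infinitely many unplayed
   elements of some single type S, and she answers X by all unplayed elements
   of type S in the other model, which are then infinitely many as well. *)

Lemma pred_ext (D : Type) (P Q : D -> Prop) : (forall x, P x <-> Q x) -> P = Q.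
Proof.
move=> PQ; apply: functional_extensionality => x.
exact: propositional_extensionality.
Qed.

Section Cardinality.
Variable D : Type.
Implicit Types (P Q : D -> Prop) (l : list D).

Definition atleast P j := exists l, length l = j /\ NoDup l /\ forall x, In x l -> P x.

Lemma finite_pred_subset P Q : (forall x, P x -> Q x) -> finite_pred Q -> finite_pred P.
Proof. by move=> PQ [l Ql]; exists l => x /PQ /Ql. Qed.

Lemma infinite_pred_superset P Q :
  (forall x, P x -> Q x) -> infinite_pred P -> infinite_pred Q.
Proof. by move=> PQ infP /(finite_pred_subset PQ). Qed.

Lemma finite_pred_union P Q :
  finite_pred P -> finite_pred Q -> finite_pred (fun x => P x \/ Q x).
Proof.
move=> [l1 Pl1] [l2 Ql2]; exists (l1 ++ l2) => x PQx; apply/in_or_app.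
by case: PQx => [/Pl1|/Ql2]; [left|right].
Qed.

Lemma finite_pred_bigunion (I : finType) (F : I -> D -> Prop) :
  (forall i, finite_pred (F i)) -> finite_pred (fun x => exists i, F i x).
Proof.
move=> finF; suff finL (L : seq I) : finite_pred (fun x => exists i, i \in L /\ F i x).
  by apply: (finite_pred_subset _ (finL (enum I))) => x [i Fx]; exists i; rewrite mem_enum.
elim: L => [|i L IH]; first by exists nil => x [j []].
apply: (finite_pred_subset _ (finite_pred_union (finF i) IH)) => x [j].
by rewrite in_cons => -[/orP[/eqP-> | Lj] Fx]; [left | right; exists j].
Qed.

Lemma infinite_pred_inhabited P : infinite_pred P -> exists x, P x.
Proof.
move=> infP; apply: NNPP => noP; apply: infP.
by exists nil => x Px; apply: noP; exists x.
Qed.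

Lemma infinite_pred_remove P d : infinite_pred P -> infinite_pred (fun x => P x /\ x <> d).
Proof.
move=> infP [l Pl]; apply: infP; exists (d :: l) => x Px.
by case: (classic (x = d)) => [|xd]; [left|right; apply: Pl].
Qed.

Lemma card_is_finite P n : card_is P n -> finite_pred P.
Proof. by move=> [l [_ [Pl _]]]; exists l => x /Pl. Qed.

Lemma finite_pred_card_is P : finite_pred P -> exists n, card_is P n.
Proof.
move=> [l Pl].
have eq_dec : forall x y : D, {x = y} + {x <> y}.
  by move=> x y; apply: excluded_middle_informative.
pose inP x := if excluded_middle_informative (P x) then true else false.
have inPP x : inP x = true <-> P x by rewrite /inP; case: excluded_middle_informative.
pose l' := filter inP (nodup eq_dec l).
exists (length l'), l'; split; last split => //.
  exact/NoDup_filter/NoDup_nodup.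
move=> x; rewrite filter_In nodup_In (inPP x).
by split => [Px|[]//]; split => //; apply: Pl.
Qed.

Lemma card_is_or_infinite P : (exists n, card_is P n) \/ infinite_pred P.
Proof. by case: (classic (finite_pred P)) => [/finite_pred_card_is|]; [left|right]. Qed.

Lemma card_is_pos P n d : card_is P n -> P d -> 0 < n.
Proof. by move=> [[|x l] [_ [Pl <-]]] // /Pl. Qed.

Lemma card_is_inhabited P n : card_is P n -> 0 < n -> exists x, P x.
Proof. by move=> [[|x l] [_ [Pl <-]]] // _; exists x; apply/Pl; left. Qed.

Lemma card_is_remove P n d : P d -> card_is P n -> card_is (fun x => P x /\ x <> d) n.-1.
Proof.
move=> Pd [l [uniq_l [Pl <-]]].
have [l1 [l2 def_l]] := in_split d l (proj1 (Pl d) Pd).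
rewrite def_l in uniq_l; exists (l1 ++ l2); split; first exact: NoDup_remove_1 uniq_l.
split; last by rewrite def_l !length_app /=; lia.
move=> x; rewrite Pl def_l !in_app_iff /=; split.
  by case=> [[l1x|[<-|l2x]] xd] //; [left|right].
move=> l12x; split; first by case: l12x; [left|right; right].
by move=> xd; apply: (NoDup_remove_2 _ _ _ uniq_l); rewrite -xd in_app_iff.
Qed.

Lemma remove_absent P d : ~ P d -> (fun x => P x /\ x <> d) = P.
Proof. by move=> Pd; apply: pred_ext => x; split => [[]//|Px]; split => // xd; subst. Qed.

Lemma card_is_atleast P n j : card_is P n -> atleast P j <-> j <= n.
Proof.
move=> [L [uniq_L [PL <-]]]; split.
  move=> [l [<- [uniq_l Pl]]]; apply/leP.
  by apply: NoDup_incl_length uniq_l _ => x /Pl /PL.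
move=> jL; exists (firstn j L); split; first by apply: firstn_length_le; apply/leP.
have def_L := firstn_skipn j L.
split; first by apply: (@NoDup_app_remove_r _ _ (skipn j L)); rewrite def_L.
by move=> x xj; apply/PL; rewrite -def_L; apply: in_or_app; left.
Qed.

End Cardinality.

Section CountEquiv.
Variables D1 D2 : Type.
Implicit Types (P : D1 -> Prop) (Q : D2 -> Prop).

(* The clause of [sim_inf] for one type: [sim_inf r.+1 M N] unfolds to
   [forall S, count_equiv r.+1 (of_type M S) (of_type N S)]. *)
Definition count_equiv r P Q :=
  (exists n, n < r /\ card_is P n /\ card_is Q n) \/
  (exists n m, r <= n /\ r <= m /\ card_is P n /\ card_is Q m) \/
  (infinite_pred P /\ infinite_pred Q).

Lemma count_equiv_inhabited r P Q d : count_equiv r.+1 P Q -> P d -> exists e, Q e.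
Proof.
case=> [[n [_ [cardP cardQ]]]|[[n [m [_ [rm [_ cardQ]]]]]|[_ infQ]]] Pd.
- by apply: card_is_inhabited cardQ _; apply: card_is_pos cardP Pd.
- by apply: card_is_inhabited cardQ _; lia.
- exact: infinite_pred_inhabited.
Qed.

Lemma count_equiv_weaken r P Q : count_equiv r.+1 P Q -> count_equiv r P Q.
Proof.
case=> [[n [nr [cardP cardQ]]]|[[n [m [rn [rm cards]]]]|infs]]; last by right; right.
  case: (ltnP n r) => [n_lt_r|r_le_n]; first by left; exists n.
  by right; left; exists n, n.
by right; left; exists n, m; do 2 (split; first exact: ltnW).
Qed.

Lemma count_equiv_remove r P Q d e : count_equiv r.+1 P Q -> (P d <-> Q e) ->
  count_equiv r (fun x => P x /\ x <> d) (fun y => Q y /\ y <> e).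
Proof.
move=> PQ de; case: (classic (P d)) => [Pd|notPd]; last first.
  have notQe : ~ Q e by move/de.
  by rewrite !remove_absent //; apply: count_equiv_weaken.
have Qe : Q e by apply/de.
case: PQ => [[n [nr [cardP cardQ]]]|[[n [m [rn [rm [cardP cardQ]]]]]|[infP infQ]]].
- have n_gt0 := card_is_pos cardP Pd.
  left; exists n.-1; split; first lia.
  by split; apply: card_is_remove.
- have n_gt0 := card_is_pos cardP Pd; have m_gt0 := card_is_pos cardQ Qe.
  right; left; exists n.-1, m.-1; split; first lia; split; first lia.
  by split; apply: card_is_remove.
- by right; right; split; apply: infinite_pred_remove.
Qed.

Lemma count_equiv_of_atleast r P Q : (infinite_pred P <-> infinite_pred Q) ->
  (forall j, j <= r -> atleast P j <-> atleast Q j) -> count_equiv r P Q.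
Proof.
move=> infPQ atPQ.
case: (card_is_or_infinite P) => [[n cardP]|infP]; last by right; right; split=> //; apply/infPQ.
case: (card_is_or_infinite Q) => [[m cardQ]|infQ]; last first.
  by case: (infPQ.2 infQ); apply: card_is_finite cardP.
have leqPQ j : j <= r -> j <= n <-> j <= m.
  by move=> jr; rewrite -(card_is_atleast j cardP) -(card_is_atleast j cardQ); apply: atPQ.
case: (ltnP n r) => [nr|rn].
  have m_le_n : m <= n by rewrite leqNgt; apply/negP => /(leqPQ _ nr).2; rewrite ltnn.
  have n_le_m : n <= m by apply/(leqPQ _ (ltnW nr)).
  have m_eq_n : m = n by apply/eqP; rewrite eqn_leq m_le_n n_le_m.
  by subst m; left; exists n.
by right; left; exists n, m; split=> //; split=> //; apply/(leqPQ _ (leqnn r)).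
Qed.

End CountEquiv.

Lemma count_equiv_sym (D1 D2 : Type) r (P : D1 -> Prop) (Q : D2 -> Prop) :
  count_equiv r P Q -> count_equiv r Q P.
Proof.
case=> [[n [? [? ?]]]|[[n [m [? [? [? ?]]]]]|[? ?]]]; first by left; exists n.
  by right; left; exists m, n.
by right; right.
Qed.

Section PartialIsomorphisms.
Variable A : finType.
Implicit Types M N : model A.

Lemma piso_nil M N : piso M N nil nil.
Proof. by split => //; split => [[|i] [|j]|[|i]]. Qed.

Lemma piso_sym M N s t : piso M N s t -> piso N M t s.
Proof.
move=> [len_st [eq_st val_st]]; split => //; split.
  by move=> i j d d' e e' *; rewrite (eq_st i j e e' d d').
by move=> i d e *; rewrite (val_st i e d).
Qed.

Lemma piso_nth M N s t : piso M N s t -> forall x,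
  (nth_error s x = None /\ nth_error t x = None) \/
  exists d e, nth_error s x = Some d /\ nth_error t x = Some e.
Proof.
move=> [len_st _] x.
case sx: (nth_error s x) => [d|]; case tx: (nth_error t x) => [e|].
- by right; exists d, e.
- have /nth_error_Some : nth_error s x <> None by rewrite sx.
  by move/nth_error_None: tx; lia.
- have /nth_error_Some : nth_error t x <> None by rewrite tx.
  by move/nth_error_None: sx; lia.
- by left.
Qed.

Lemma piso_pval M N s t i d e : piso M N s t -> nth_error s i = Some d ->
  nth_error t i = Some e -> forall a, pval M a d <-> pval N a e.
Proof. by move=> [_ [_ val_st]]; apply: val_st. Qed.

Lemma piso_eq M N s t i j d d' e e' : piso M N s t ->
  nth_error s i = Some d -> nth_error s j = Some d' ->
  nth_error t i = Some e -> nth_error t j = Some e' -> d = d' <-> e = e'.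
Proof. by move=> [_ [eq_st _]]; apply: eq_st. Qed.

Lemma piso_cons_fresh M N s t d e : piso M N s t -> ~ In d s -> ~ In e t ->
  (forall a, pval M a d <-> pval N a e) -> piso M N (d :: s) (e :: t).
Proof.
move=> [len_st [eq_st val_st]] ds et de; split; first by rewrite /= len_st.
split; last by move=> [|i] x y /=; [move=> [<-] [<-] | apply: val_st].
move=> [|i] [|j] x x' y y' /=; last exact: eq_st.
- by move=> [<-] [<-] [<-] [<-].
- move=> [<-] sx' [<-] ty'.
  split=> same; [case: ds | case: et]; rewrite same.
    exact: nth_error_In sx'.
  exact: nth_error_In ty'.
- move=> sx [<-] ty [<-].
  split=> same; [case: ds | case: et]; rewrite -same.
    exact: nth_error_In sx.
  exact: nth_error_In ty.
Qed.

Lemma piso_cons_nth M N s t i d e : piso M N s t -> nth_error s i = Some d ->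
  nth_error t i = Some e -> piso M N (d :: s) (e :: t).
Proof.
move=> [len_st [eq_st val_st]] sd te; split; first by rewrite /= len_st.
split; last by move=> [|j] x y /=; [move=> [<-] [<-]; apply: val_st sd te | apply: val_st].
move=> [|j] [|j'] x x' y y' /=; last exact: eq_st.
- by move=> [<-] [<-] [<-] [<-].
- by move=> [<-] sx' [<-] ty'; apply: eq_st sd sx' te ty'.
- by move=> sx [<-] ty [<-]; apply: eq_st sx sd ty te.
Qed.

End PartialIsomorphisms.

Section Strategy.
Variable A : finType.
Implicit Types M N : model A.

Definition fresh_of_type M (s : list (dom M)) (S : {set A}) (x : dom M) :=
  of_type M S x /\ ~ In x s.
#[global] Arguments fresh_of_type : clear implicits.

Lemma fresh_of_type_nil M S : fresh_of_type M nil S = of_type M S.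
Proof. by apply: pred_ext => x; rewrite /fresh_of_type /=; tauto. Qed.

Lemma fresh_of_type_cons M s d S :
  fresh_of_type M (d :: s) S = fun x => fresh_of_type M s S x /\ x <> d.
Proof.
apply: pred_ext => x; rewrite /fresh_of_type /=.
split=> [[Sx dxs]|[[Sx xs] xd]].
  by split; [split=> // xs; apply: dxs; right | move=> xd; apply: dxs; left].
by split=> // -[dx|//]; apply: xd.
Qed.

Definition type_of M (d : dom M) : {set A} :=
  [set a | if excluded_middle_informative (pval M a d) then true else false].

Lemma of_type_type_of M d : of_type M (type_of d) d.
Proof. by move=> a; rewrite inE; case: excluded_middle_informative. Qed.

Lemma of_type_inj M S T d : of_type M S d -> of_type M T d -> S = T.
Proof. by move=> Sd Td; apply/setP => a; apply/idP/idP => [/Sd/Td|/Td/Sd]. Qed.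

Lemma fresh_of_type_iff M N s t S d e :
  fresh_of_type M s S d -> fresh_of_type N t S e ->
  forall T, fresh_of_type M s T d <-> fresh_of_type N t T e.
Proof.
move=> [Sd sd] [Se te] T.
by split=> [[/of_type_inj/(_ Sd) ->]|[/of_type_inj/(_ Se) ->]].
Qed.

Lemma piso_cons_fresh_of_type M N s t S d e : piso M N s t ->
  fresh_of_type M s S d -> fresh_of_type N t S e -> piso M N (d :: s) (e :: t).
Proof. by move=> st [Sd sd] [Se te]; apply: piso_cons_fresh => // a; rewrite Sd Se. Qed.

(* The invariant maintained by E's strategy when r rounds are left. *)
Definition fresh_equiv M N r s t :=
  forall S, count_equiv r (fresh_of_type M s S) (fresh_of_type N t S).
#[global] Arguments fresh_equiv : clear implicits.

Lemma fresh_equiv_sym M N r s t : fresh_equiv M N r s t -> fresh_equiv N M r t s.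
Proof. by move=> st S; apply: count_equiv_sym. Qed.

Lemma fresh_equiv_cons M N r s t d e : fresh_equiv M N r.+1 s t ->
  (forall T, fresh_of_type M s T d <-> fresh_of_type N t T e) ->
  fresh_equiv M N r (d :: s) (e :: t).
Proof. by move=> st de T; rewrite !fresh_of_type_cons; apply: count_equiv_remove. Qed.

Lemma fresh_equiv_forth M N r s t d : piso M N s t -> fresh_equiv M N r.+1 s t ->
  exists e, piso M N (d :: s) (e :: t) /\
            forall T, fresh_of_type M s T d <-> fresh_of_type N t T e.
Proof.
move=> st eq_st; case: (classic (In d s)) => [ds|notds].
  have [i si] := In_nth_error _ _ ds.
  case: (piso_nth st i) => [[] | [_ [e [_ ti]]]]; first by rewrite si.
  exists e; split; first exact: piso_cons_nth st si ti.
  by move=> T; split=> -[_ []] //; apply: nth_error_In ti.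
have fresh_d : fresh_of_type M s (type_of d) d by split=> //; apply: of_type_type_of.
have [e fresh_e] := count_equiv_inhabited (eq_st (type_of d)) fresh_d.
exists e; split; first exact: piso_cons_fresh_of_type st fresh_d fresh_e.
exact: fresh_of_type_iff fresh_d fresh_e.
Qed.

(* Pigeonhole: there are finitely many types and finitely many played elements. *)
Lemma infinite_fresh_of_type M s (X : dom M -> Prop) : infinite_pred X ->
  exists S, infinite_pred (fun x => X x /\ fresh_of_type M s S x).
Proof.
move=> infX; apply: NNPP => none; apply: infX.
have finS S : finite_pred (fun x => X x /\ fresh_of_type M s S x).
  by apply: NNPP => infS; apply: none; exists S.
have fin_s : finite_pred (fun x => In x s) by exists s.
have := finite_pred_union fin_s (finite_pred_bigunion finS).
apply: finite_pred_subset => x Xx; case: (classic (In x s)) => [|notxs]; [by left|right].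
by exists (type_of x); split=> //; split=> //; apply: of_type_type_of.
Qed.

Lemma fresh_equiv_forth_infinite M N r s t (X : dom M -> Prop) :
  piso M N s t -> fresh_equiv M N r.+1 s t -> infinite_pred X ->
  exists Y : dom N -> Prop, infinite_pred Y /\ forall e, Y e ->
  exists d, X d /\ piso M N (d :: s) (e :: t) /\
            forall T, fresh_of_type M s T d <-> fresh_of_type N t T e.
Proof.
move=> st eq_st infX; have [S infXS] := infinite_fresh_of_type s infX.
have infS : infinite_pred (fresh_of_type M s S) by apply: infinite_pred_superset infXS => x [].
have infT : infinite_pred (fresh_of_type N t S).
  case: (eq_st S) => [[n [_ [cardS _]]]|[[n [m [_ [_ [cardS _]]]]]|[_ //]]];
  by case: infS; apply: card_is_finite cardS.
exists (fresh_of_type N t S); split=> // e fresh_e.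
have [d [Xd fresh_d]] := infinite_pred_inhabited infXS.
exists d; split=> //; split; first exact: piso_cons_fresh_of_type st fresh_d fresh_e.
exact: fresh_of_type_iff fresh_d fresh_e.
Qed.

Lemma fresh_equiv_ef_win M N r s t :
  piso M N s t -> fresh_equiv M N r s t -> ef_win M N r s t.
Proof.
elim: r s t => [//|r IH] s t st eq_st.
have next d e : piso M N (d :: s) (e :: t) ->
    (forall T, fresh_of_type M s T d <-> fresh_of_type N t T e) ->
    ef_win M N r (d :: s) (e :: t).
  by move=> st' de; apply: IH st' _; apply: fresh_equiv_cons.
have next_sym d e : piso N M (e :: t) (d :: s) ->
    (forall T, fresh_of_type N t T e <-> fresh_of_type M s T d) ->
    piso M N (d :: s) (e :: t) /\ ef_win M N r (d :: s) (e :: t).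
  move=> ts' ed; have st' := piso_sym ts'; split=> //.
  by apply: next st' _ => T; rewrite ed.
have ts := piso_sym st; have eq_ts := fresh_equiv_sym eq_st.
split; [|split; [|split]].
- move=> d; have [e [st' de]] := fresh_equiv_forth d st eq_st.
  by exists e; split=> //; apply: next.
- move=> e; have [d [ts' ed]] := fresh_equiv_forth e ts eq_ts.
  by exists d; apply: next_sym.
- move=> X infX; have [Y [infY XY]] := fresh_equiv_forth_infinite st eq_st infX.
  exists Y; split=> // e /XY [d [Xd [st' de]]].
  by exists d; split=> //; split=> //; apply: next.
- move=> Y infY; have [X [infX YX]] := fresh_equiv_forth_infinite ts eq_ts infY.
  exists X; split=> // d /YX [e [Ye [ts' ed]]].
  by exists e; split=> //; apply: next_sym.
Qed.

End Strategy.

Lemma ef_win_sat_iff (A : finType) (M N : model A) (p : form A) r s t :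
  piso M N s t -> ef_win M N r s t -> qrank p <= r -> sat M s p <-> sat N t p.
Proof.
elim: p r s t => [|| a x | a x | x y | x y | p IHp q IHq | p IHp q IHq
                 | p IHp | p IHp | p IHp | p IHp] r s t st win /= rank_p.
- by [].
- by [].
- case: (piso_nth st x) => [[-> ->] //|[d [e [sd te]]]]; rewrite sd te.
  exact: piso_pval st sd te a.
- case: (piso_nth st x) => [[-> ->] //|[d [e [sd te]]]]; rewrite sd te.
  by rewrite (piso_pval st sd te a).
- case: (piso_nth st x) => [[-> ->] //|[d [e [sd te]]]]; rewrite sd te.
  case: (piso_nth st y) => [[-> ->] //|[d' [e' [sd' te']]]]; rewrite sd' te'.
  exact: piso_eq st sd sd' te te'.
- case: (piso_nth st x) => [[-> ->] //|[d [e [sd te]]]]; rewrite sd te.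
  case: (piso_nth st y) => [[-> ->] //|[d' [e' [sd' te']]]]; rewrite sd' te'.
  by rewrite (piso_eq st sd sd' te te').
- by rewrite (IHp r s t) ?(IHq r s t) //; lia.
- by rewrite (IHp r s t) ?(IHq r s t) //; lia.
all: case: r win rank_p => [//|r] [forth [back [forth_inf back_inf]]] rank_p.
- split=> [[d pd]|[e pe]].
    by have [e [st' win']] := forth d; exists e; apply/(IHp r _ _ st' win').
  by have [d [st' win']] := back e; exists d; apply/(IHp r _ _ st' win').
- split=> [pM e|pN d].
    by have [d [st' win']] := back e; apply/(IHp r _ _ st' win').
  by have [e [st' win']] := forth d; apply/(IHp r _ _ st' win').
- split=> [infM|infN].
    have [Y [infY YX]] := forth_inf _ infM; apply: infinite_pred_superset infY.
    by move=> e /YX [d [pd [st' win']]]; apply/(IHp r _ _ st' win').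
  have [X [infX XY]] := back_inf _ infN; apply: infinite_pred_superset infX.
  by move=> d /XY [e [pe [st' win']]]; apply/(IHp r _ _ st' win').
- split=> [finM|finN]; apply: NNPP => inf_neg.
    have [X [infX XY]] := back_inf _ inf_neg; apply: infX; apply: finite_pred_subset finM.
    by move=> d /XY [e [npe [st' win']]] pd; apply/npe/(IHp r _ _ st' win').
  have [Y [infY YX]] := forth_inf _ inf_neg; apply: infY; apply: finite_pred_subset finN.
  by move=> e /YX [d [npd [st' win']]] pe; apply/npd/(IHp r _ _ st' win').
Qed.

Section CharacteristicFormulas.
Variable A : finType.
Implicit Types M N : model A.

Definition type_form (S : {set A}) : form A :=
  foldr (fun a p => FAnd (if a \in S then FAtom a 0 else FNAtom a 0) p) FTrue (enum A).

Lemma wf_type_form n S : wf n.+1 (type_form S).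
Proof. by rewrite /type_form; elim: (enum A) => //= a l ->; case: (a \in S). Qed.

Lemma qrank_type_form S : qrank (type_form S) = 0.
Proof. by rewrite /type_form; elim: (enum A) => //= a l ->; case: (a \in S). Qed.

Lemma sat_type_form M env d S : sat M (d :: env) (type_form S) <-> of_type M S d.
Proof.
suff satL (L : seq A) : sat M (d :: env)
    (foldr (fun a p => FAnd (if a \in S then FAtom a 0 else FNAtom a 0) p) FTrue L)
    <-> forall a, a \in L -> (pval M a d <-> a \in S).
  by rewrite satL; split=> [Sd a|Sd a _]; [apply: Sd; rewrite mem_enum | apply: Sd].
elim: L => [|a L IH] /=; first by split.
rewrite IH; split=> [[ad Sd] b|Sd].
  by rewrite in_cons => /orP[/eqP->|/Sd//]; case: (a \in S) ad; split.
split; last by move=> b Lb; apply: Sd; rewrite in_cons Lb orbT.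
by have := Sd a (mem_head a L); case: (a \in S) => aS; [apply/aS | move/aS].
Qed.

Fixpoint distinct_form (m : nat) : form A :=
  if m is i.+1 then FAnd (@FNeq A 0 m) (distinct_form i) else FTrue.

Lemma wf_distinct_form n m : m <= n -> wf n.+1 (distinct_form m).
Proof. by elim: m => //= m IH mn; rewrite IH ?andbT //; lia. Qed.

Lemma qrank_distinct_form m : qrank (distinct_form m) = 0.
Proof. by elim: m => //= m ->. Qed.

Lemma sat_distinct_form M env d : sat M (d :: env) (distinct_form (length env)) <-> ~ In d env.
Proof.
suff satm m : m <= length env ->
    sat M (d :: env) (distinct_form m) <-> forall i, i < m -> nth_error env i <> Some d.
  rewrite satm //; split=> [notenv denv|notin i _ envi]; last exact: notin (nth_error_In _ _ envi).
  have [i envi] := In_nth_error _ _ denv.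
  have i_lt : i < length env by apply/ltP/nth_error_Some; rewrite envi.
  exact: notenv i_lt envi.
elim: m => [|m IH] m_le /=; first by split.
rewrite IH; last lia.
case envm: (nth_error env m) => [e|]; last by move/nth_error_None: envm; lia.
split=> [[ed notenv] i|notenv].
  rewrite ltnS leq_eqVlt => /orP[/eqP->|/notenv//].
  by rewrite envm => -[de]; apply: ed; rewrite de.
split=> [ed|i im]; last by apply: notenv; lia.
by apply: (notenv m) => //; rewrite envm ed.
Qed.

(* In de Bruijn terms, [distinct_form m] says that variable 0 differs from
   variables 1, ..., m, and [atleast_form S j m] that there are j distinct
   elements of type S that differ from variables 0, ..., m - 1. *)
Fixpoint atleast_form (S : {set A}) (j m : nat) : form A :=
  if j is j'.+1 then FEx (FAnd (FAnd (type_form S) (distinct_form m)) (atleast_form S j' m.+1))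
  else FTrue.

Lemma wf_atleast_form S j m : wf m (atleast_form S j m).
Proof. by elim: j m => //= j IH m; rewrite wf_type_form wf_distinct_form // IH. Qed.

Lemma qrank_atleast_form S j m : qrank (atleast_form S j m) = j.
Proof. by elim: j m => //= j IH m; rewrite qrank_type_form qrank_distinct_form IH !max0n. Qed.

Lemma sat_atleast_form M S j env :
  sat M env (atleast_form S j (length env)) <-> atleast (fresh_of_type M env S) j.
Proof.
elim: j env => [|j IH] env /=.
  by split=> // _; exists nil; split=> //; split=> [|x []]; constructor.
split.
  move=> [d [[/sat_type_form Sd /sat_distinct_form denv] /(IH (d :: env))]].
  move=> [l [<- [uniq_l fresh_l]]]; exists (d :: l); split=> //.
  split; first by constructor=> // /fresh_l [_ []]; left.
  move=> x [<-|/fresh_l [Sx dxenv]]; first by split.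
  by split=> // xenv; apply: dxenv; right.
move=> [[|d l] [//= [lj] [/NoDup_cons_iff [dl uniq_l] fresh_l]]].
have [Sd denv] := fresh_l d (or_introl erefl).
exists d; split; first by split; [apply/sat_type_form | apply/sat_distinct_form].
apply/(IH (d :: env)); exists l; split=> //; split=> // x lx.
have [Sx xenv] := fresh_l x (or_intror lx); split=> // -[dx|//].
by apply: dl; rewrite dx.
Qed.

Lemma sat_infinite_type M S :
  sat M nil (FExInf (type_form S)) <-> infinite_pred (of_type M S).
Proof.
rewrite /=; suff -> : (fun d => sat M (d :: nil) (type_form S)) = of_type M S by [].
by apply: pred_ext => d; apply: sat_type_form.
Qed.

End CharacteristicFormulas.

Lemma rank_equiv_sim_inf (A : finType) k (M N : model A) :
  rank_equiv k M N -> sim_inf k M N.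
Proof.
case: k => [//|k] eqMN S; apply: count_equiv_of_atleast.
  rewrite -!sat_infinite_type; apply: eqMN; first exact: wf_type_form.
  by rewrite /= qrank_type_form.
move=> j jk; rewrite -(fresh_of_type_nil M) -(fresh_of_type_nil N).
rewrite -!(sat_atleast_form S j nil); apply: eqMN; first exact: wf_atleast_form.
by rewrite qrank_atleast_form.
Qed.

Lemma sim_inf_ef_win (A : finType) k (M N : model A) : sim_inf k M N -> E_wins k M N.
Proof.
case: k => [//|k] simMN; apply: fresh_equiv_ef_win; first exact: piso_nil.
by move=> S; rewrite !fresh_of_type_nil; apply: simMN.
Qed.

Lemma ef_win_rank_equiv (A : finType) k (M N : model A) : E_wins k M N -> rank_equiv k M N.
Proof. by move=> win p _; apply: ef_win_sat_iff win; apply: piso_nil. Qed.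

Theorem proposition3p10 (A : finType) (k : nat) (M N : model A) :
  (rank_equiv k M N <-> sim_inf k M N) /\ (sim_inf k M N <-> E_wins k M N).
Proof.
have := @rank_equiv_sim_inf A k M N; have := @sim_inf_ef_win A k M N.
have := @ef_win_rank_equiv A k M N; tauto.
Qed.
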